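(* Fix a real number $\tau\neq 0$ and consider the following linear operators on smooth functions $\Phi(x,t)$: $$H=\partial_t,\quad P=\partial_x,\quad K=-x\,\frac{e^{\tau\partial_t}-1}{\tau}-t\,e^{-\tau\partial_t}\partial_x,\quad D=-x\partial_x-t\,\frac{1-e^{-\tau\partial_t}}{\tau},$$ $$C_1=(x^2+t^2e^{-\tau\partial_t})\frac{e^{\tau\partial_t}-1}{\tau}+2xt\partial_x+\tau x\partial_x+\tau x^2\partial_x^2,$$ $$C_2=-(x^2+t^2e^{-2\tau\partial_t})\partial_x-2xt\,\frac{1-e^{-\tau\partial_t}}{\tau}+\tau t\,e^{-2\tau\partial_t}\partial_x,$$ where $e^{a\tau\partial_t}$ denotes the shift operator $\Phi(x,t)\mapsto\Phi(x,t+a\tau)$ and, in expressions involving $e^{\pm\tau H}$, $e^{\pm\tau H}$ is interpreted as $e^{\pm\tau\partial_t}$. Then these operators satisfy the commutation relations $[K,H]=e^{-\tau H}P$, $[K,P]=(e^{\tau H}-1)/\tau$, $[H,P]=0$, $[D,H]=(1-e^{-\tau H})/\tau$, $[D,C_1]=-C_1+\tau D^2$, $[H,C_1]=-2D$, $[D,P]=P$, $[D,C_2]=-C_2$, $[P,C_2]=2D$, $[K,C_1]=C_2$, $[K,C_2]=C_1-\tau D^2$, $[C_1,C_2]=-\tau(DC_2+C_2D)$, $[H,C_2]=e^{-\tau H}K+Ke^{-\tau H}$, $[P,C_1]=-2K-\tau(DP+PD)$, $[K,D]=0$, i.e. they give a representation of the algebra $U_\tau(so(2,2))$. As $\tau\to0$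 they reduce to the vector fields $H=\partial_t$, $P=\partial_x$, $K=-t\partial_x-x\partial_t$, $D=-x\partial_x-t\partial_t$, $C_1=(x^2+t^2)\partial_t+2xt\partial_x$, $C_2=-(x^2+t^2)\partial_x-2xt\partial_t$.
   Context: Here $(e^{\tau\partial_t}-1)/\tau$ and $(1-e^{-\tau\partial_t})/\tau$ are the forward and backward difference operators in $t$ with step $\tau$; all products are compositions of operators, with multiplication operators by $x$, $t$ understood. *)

From Stdlib Require Import Reals List.
From Coquelicot Require Import Coquelicot.
Open Scope R_scope.

Definition Fun2 := R -> R -> R.
Definition Op := Fun2 -> Fun2.

Definition dx : Op := fun Phi x t => Derive (fun y => Phi y t) x.
Definition dt : Op := fun Phi x t => Derive (fun s => Phi x s) t.

(* shift operator e^{a d_t} : Phi(x,t) |-> Phi(x,t+a) *)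
Definition shift (a : R) : Op := fun Phi x t => Phi x (t + a).

Definition mulf (f : Fun2) : Op := fun Phi x t => f x t * Phi x t.

Definition op_id : Op := fun Phi => Phi.
Definition op_zero : Op := fun _ _ _ => 0.
Definition op_add (A B : Op) : Op := fun Phi x t => A Phi x t + B Phi x t.
Definition op_sub (A B : Op) : Op := fun Phi x t => A Phi x t - B Phi x t.
Definition op_opp (A : Op) : Op := fun Phi x t => - A Phi x t.
Definition op_scal (c : R) (A : Op) : Op := fun Phi x t => c * A Phi x t.
Definition op_comp (A B : Op) : Op := fun Phi => A (B Phi).
Definition comm (A B : Op) : Op := op_sub (op_comp A B) (op_comp B A).

(* forward / backward differences (e^{tau d_t}-1)/tau and (1-e^{-tau d_t})/tau *)
Definition fwd (tau : R) : Op := op_scal (/ tau) (op_sub (shift tau) op_id).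
Definition bwd (tau : R) : Op := op_scal (/ tau) (op_sub op_id (shift (- tau))).

Definition X : Fun2 := fun x _ => x.
Definition T : Fun2 := fun _ t => t.

Definition Hop : Op := dt.
Definition Pop : Op := dx.
Definition Kop (tau : R) : Op :=
  op_sub (op_opp (op_comp (mulf X) (fwd tau)))
         (op_comp (mulf T) (op_comp (shift (- tau)) dx)).
Definition Dop (tau : R) : Op :=
  op_sub (op_opp (op_comp (mulf X) dx)) (op_comp (mulf T) (bwd tau)).
Definition C1op (tau : R) : Op :=
  op_add (op_add (op_add
    (op_comp (op_add (mulf (fun x _ => x ^ 2))
                     (op_comp (mulf (fun _ t => t ^ 2)) (shift (- tau))))
             (fwd tau))
    (op_comp (mulf (fun x t => 2 * x * t)) dx))
    (op_scal tau (op_comp (mulf X) dx)))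
    (op_scal tau (op_comp (mulf (fun x _ => x ^ 2)) (op_comp dx dx))).
Definition C2op (tau : R) : Op :=
  op_add (op_sub
    (op_opp (op_comp (op_add (mulf (fun x _ => x ^ 2))
                             (op_comp (mulf (fun _ t => t ^ 2)) (shift (- 2 * tau))))
                     dx))
    (op_comp (mulf (fun x t => 2 * x * t)) (bwd tau)))
    (op_scal tau (op_comp (mulf T) (op_comp (shift (- 2 * tau)) dx))).

Fixpoint iter_partial (w : list bool) (Phi : Fun2) : Fun2 :=
  match w with
  | nil => Phi
  | b :: w' => (if b then dx else dt) (iter_partial w' Phi)
  end.

Definition smooth (Phi : Fun2) : Prop :=
  forall (w : list bool) (x t : R),
    ex_derive (fun y => iter_partial w Phi y t) x /\
    ex_derive (fun s => iter_partial w Phi x s) t /\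
    continuous (fun p : R * R => iter_partial w Phi (fst p) (snd p)) (x, t).

Definition op_eq (A B : Op) : Prop :=
  forall Phi : Fun2, smooth Phi -> forall x t : R, A Phi x t = B Phi x t.

(* Every operator involved is built from d_x, d_t, the shifts t -> t +- tau and the
   multiplications by x and t.  Applied to a smooth Phi, such an expression evaluates to a
   finite sum of terms c x^i (t + k tau)^j (d_x^m d_t^n Phi)(x, t + k tau): this class is
   closed under the generators, by the Leibniz rule and the symmetry of mixed partial
   derivatives.  Each commutation relation is therefore checked by computing both normal
   forms and comparing them as rational expressions in x, t, tau and the values of the
   partial derivatives of Phi.  As tau -> 0, the finite differences become difference
   quotients of Phi in t, the shifts disappear by continuity, and the remaining terms carry
   an explicit factor tau. *)

From Stdlib Require Import Reals List FunctionalExtensionality Lra.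
From Coquelicot Require Import Coquelicot.
Open Scope R_scope.
Import ListNotations.

Definition partial_deriv (m n : nat) (Phi : Fun2) : Fun2 :=
  Nat.iter m dx (Nat.iter n dt Phi).

Lemma iter_partial_app (w w' : list bool) (G : Fun2) :
  iter_partial w (iter_partial w' G) = iter_partial (w ++ w') G.
Proof. induction w as [|b w IH]; simpl; congruence. Qed.

Lemma smooth_iter_partial (w : list bool) (G : Fun2) :
  smooth G -> smooth (iter_partial w G).
Proof. intros HG w' x t. rewrite iter_partial_app. apply HG. Qed.

Lemma smooth_dx (G : Fun2) : smooth G -> smooth (dx G).
Proof. exact (smooth_iter_partial (true :: nil) G). Qed.

Lemma smooth_dt (G : Fun2) : smooth G -> smooth (dt G).
Proof. exact (smooth_iter_partial (false :: nil) G). Qed.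

Lemma smooth_partial_deriv (m n : nat) (Phi : Fun2) :
  smooth Phi -> smooth (partial_deriv m n Phi).
Proof.
  intros HPhi. unfold partial_deriv.
  induction m as [|m IH]; simpl; [induction n; simpl|]; auto using smooth_dx, smooth_dt.
Qed.

Lemma smooth_ex_derive_x (G : Fun2) (x t : R) :
  smooth G -> ex_derive (fun y => G y t) x.
Proof. intros HG. exact (proj1 (HG nil x t)). Qed.

Lemma smooth_ex_derive_t (G : Fun2) (x t : R) :
  smooth G -> ex_derive (fun s => G x s) t.
Proof. intros HG. exact (proj1 (proj2 (HG nil x t))). Qed.

Lemma smooth_continuity_2d_pt (G : Fun2) (x t : R) :
  smooth G -> continuity_2d_pt G x t.
Proof. intros HG. apply continuity_2d_pt_filterlim, (HG nil). Qed.

Lemma dt_dx_comm (G : Fun2) (x t : R) :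
  smooth G -> dt (dx G) x t = dx (dt G) x t.
Proof.
  intros HG. symmetry. apply Schwarz.
  - exists (mkposreal 1 Rlt_0_1). intros u v _ _. repeat split.
    + apply smooth_ex_derive_x; auto.
    + apply smooth_ex_derive_t; auto.
    + apply (smooth_ex_derive_x (dt G)); auto using smooth_dt.
    + apply (smooth_ex_derive_t (dx G)); auto using smooth_dx.
  - apply (smooth_continuity_2d_pt (dx (dt G))); auto using smooth_dx, smooth_dt.
  - apply (smooth_continuity_2d_pt (dt (dx G))); auto using smooth_dx, smooth_dt.
Qed.

Lemma dt_partial_deriv (m n : nat) (Phi : Fun2) (x t : R) :
  smooth Phi -> dt (partial_deriv m n Phi) x t = partial_deriv m (S n) Phi x t.
Proof.
  intros HPhi. revert x t. induction m as [|m IH]; intros x t; [reflexivity|].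
  change (dt (dx (partial_deriv m n Phi)) x t = dx (partial_deriv m (S n) Phi) x t).
  rewrite dt_dx_comm by auto using smooth_partial_deriv.
  apply Derive_ext. intro y. apply IH.
Qed.

Record monomial := Monomial
  { coef : R; xpow : nat; tpow : nat; delay : Z; xder : nat; tder : nat }.

Section NormalForm.

Variables (Phi : Fun2) (tau : R).

(* The power of t is taken in the shifted variable of the derivative, so that a shift only
   changes [delay]; shifts are integer multiples of tau so that equal shifts are
   syntactically equal once [delay] is computed. *)
Definition eval_monomial (q : monomial) (x t : R) : R :=
  let s := t + IZR (delay q) * tau in
  coef q * x ^ xpow q * s ^ tpow q * partial_deriv (xder q) (tder q) Phi x s.

Fixpoint eval_poly (p : list monomial) (x t : R) : R :=
  match p with
  | [] => 0
  | q :: p' => eval_monomial q x t + eval_poly p' x t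
  end.

Lemma eval_poly_app (p1 p2 : list monomial) (x t : R) :
  eval_poly (p1 ++ p2) x t = eval_poly p1 x t + eval_poly p2 x t.
Proof. induction p1 as [|q p1 IH]; simpl; [|rewrite IH]; ring. Qed.

Lemma eval_poly_flat_map_scale (f : monomial -> list monomial) (c : R)
    (p : list monomial) (x t : R) :
  (forall q, eval_poly (f q) x t = c * eval_monomial q x t) ->
  eval_poly (flat_map f p) x t = c * eval_poly p x t.
Proof. intros Hf. induction p as [|q p IH]; simpl; [|rewrite eval_poly_app, Hf, IH]; ring. Qed.

Definition scale_monomial (c : R) (q : monomial) : monomial :=
  Monomial (c * coef q) (xpow q) (tpow q) (delay q) (xder q) (tder q).

Definition poly_scale (c : R) : list monomial -> list monomial :=
  flat_map (fun q => [scale_monomial c q]).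

Definition poly_mul_x : list monomial -> list monomial :=
  flat_map (fun q => [Monomial (coef q) (S (xpow q)) (tpow q) (delay q) (xder q) (tder q)]).

(* t = (t + k tau) - k tau *)
Definition poly_mul_t : list monomial -> list monomial :=
  flat_map (fun q =>
    [Monomial (coef q) (xpow q) (S (tpow q)) (delay q) (xder q) (tder q);
     scale_monomial (- (IZR (delay q) * tau)) q]).

Definition poly_shift (k : Z) : list monomial -> list monomial :=
  flat_map (fun q => [Monomial (coef q) (xpow q) (tpow q) (delay q + k) (xder q) (tder q)]).

(* Uniform Leibniz rule: when [xpow q = 0] the first term has coefficient [INR 0 = 0]. *)
Definition poly_dx : list monomial -> list monomial :=
  flat_map (fun q =>
    [Monomial (coef q * INR (xpow q)) (pred (xpow q)) (tpow q) (delay q) (xder q) (tder q);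
     Monomial (coef q) (xpow q) (tpow q) (delay q) (S (xder q)) (tder q)]).

Definition poly_dt : list monomial -> list monomial :=
  flat_map (fun q =>
    [Monomial (coef q * INR (tpow q)) (xpow q) (pred (tpow q)) (delay q) (xder q) (tder q);
     Monomial (coef q) (xpow q) (tpow q) (delay q) (xder q) (S (tder q))]).

Lemma eval_poly_scale (c : R) (p : list monomial) (x t : R) :
  eval_poly (poly_scale c p) x t = c * eval_poly p x t.
Proof. apply eval_poly_flat_map_scale. intros q. simpl. unfold eval_monomial; simpl. ring. Qed.

Lemma eval_poly_mul_x (p : list monomial) (x t : R) :
  eval_poly (poly_mul_x p) x t = x * eval_poly p x t.
Proof. apply eval_poly_flat_map_scale. intros q. simpl. unfold eval_monomial; simpl. ring. Qed.

Lemma eval_poly_mul_t (p : list monomial) (x t : R) :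
  eval_poly (poly_mul_t p) x t = t * eval_poly p x t.
Proof. apply eval_poly_flat_map_scale. intros q. simpl. unfold eval_monomial; simpl. ring. Qed.

Lemma eval_poly_shift (k : Z) (p : list monomial) (x t : R) :
  eval_poly (poly_shift k p) x t = eval_poly p x (t + IZR k * tau).
Proof.
  induction p as [|q p IH]; simpl; [ring|].
  rewrite IH. unfold eval_monomial; simpl.
  replace (t + IZR k * tau + IZR (delay q) * tau) with (t + IZR (delay q + k) * tau)
    by (rewrite plus_IZR; ring).
  ring.
Qed.

Hypothesis smooth_Phi : smooth Phi.

Lemma is_derive_eval_monomial_x (q : monomial) (x t : R) :
  is_derive (fun y => eval_monomial q y t) x (eval_poly (poly_dx [q]) x t).
Proof.
  simpl. unfold eval_monomial; simpl. auto_derive.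
  - apply smooth_ex_derive_x, smooth_partial_deriv, smooth_Phi.
  - unfold dx. ring.
Qed.

Lemma is_derive_eval_monomial_t (q : monomial) (x t : R) :
  is_derive (fun s => eval_monomial q x s) t (eval_poly (poly_dt [q]) x t).
Proof.
  simpl. unfold eval_monomial; simpl. auto_derive.
  - apply smooth_ex_derive_t, smooth_partial_deriv, smooth_Phi.
  - rewrite <- dt_partial_deriv by exact smooth_Phi. unfold dt. ring.
Qed.

Lemma is_derive_eval_poly_x (p : list monomial) (x t : R) :
  is_derive (fun y => eval_poly p y t) x (eval_poly (poly_dx p) x t).
Proof.
  induction p as [|q p IH]; [simpl; auto_derive; auto|].
  change (poly_dx (q :: p)) with (poly_dx [q] ++ poly_dx p).
  rewrite eval_poly_app.
  apply (is_derive_plus (fun y => eval_monomial q y t)); [apply is_derive_eval_monomial_x | exact IH].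
Qed.

Lemma is_derive_eval_poly_t (p : list monomial) (x t : R) :
  is_derive (fun s => eval_poly p x s) t (eval_poly (poly_dt p) x t).
Proof.
  induction p as [|q p IH]; [simpl; auto_derive; auto|].
  change (poly_dt (q :: p)) with (poly_dt [q] ++ poly_dt p).
  rewrite eval_poly_app.
  apply (is_derive_plus (fun s => eval_monomial q x s)); [apply is_derive_eval_monomial_t | exact IH].
Qed.

End NormalForm.

Inductive op_expr : Type :=
  | oDx | oDt | oShiftFwd | oShiftBwd | oMulX | oMulT | oId | oZero
  | oAdd (a b : op_expr) | oSub (a b : op_expr) | oOpp (a : op_expr)
  | oScal (c : R) (a : op_expr) | oComp (a b : op_expr).

Fixpoint interp_op (tau : R) (e : op_expr) : Op :=
  match e with
  | oDx => dx
  | oDt => dt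
  | oShiftFwd => shift tau
  | oShiftBwd => shift (- tau)
  | oMulX => mulf X
  | oMulT => mulf T
  | oId => op_id
  | oZero => op_zero
  | oAdd a b => op_add (interp_op tau a) (interp_op tau b)
  | oSub a b => op_sub (interp_op tau a) (interp_op tau b)
  | oOpp a => op_opp (interp_op tau a)
  | oScal c a => op_scal c (interp_op tau a)
  | oComp a b => op_comp (interp_op tau a) (interp_op tau b)
  end.

Fixpoint nf_apply (tau : R) (e : op_expr) (p : list monomial) : list monomial :=
  match e with
  | oDx => poly_dx p
  | oDt => poly_dt p
  | oShiftFwd => poly_shift 1 p
  | oShiftBwd => poly_shift (-1) p
  | oMulX => poly_mul_x p
  | oMulT => poly_mul_t tau p
  | oId => p
  | oZero => []
  | oAdd a b => nf_apply tau a p ++ nf_apply tau b p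
  | oSub a b => nf_apply tau a p ++ poly_scale (-1) (nf_apply tau b p)
  | oOpp a => poly_scale (-1) (nf_apply tau a p)
  | oScal c a => poly_scale c (nf_apply tau a p)
  | oComp a b => nf_apply tau a (nf_apply tau b p)
  end.

Lemma interp_op_eval_poly (Phi : Fun2) (tau : R) (e : op_expr) (p : list monomial) :
  smooth Phi ->
  interp_op tau e (eval_poly Phi tau p) = eval_poly Phi tau (nf_apply tau e p).
Proof.
  intros HPhi. revert p.
  induction e; intros p; simpl;
    repeat (apply functional_extensionality; intro);
    unfold op_add, op_sub, op_opp, op_scal, op_comp, op_zero, op_id, mulf, shift, X, T.
  - apply is_derive_unique, is_derive_eval_poly_x, HPhi.
  - apply is_derive_unique, is_derive_eval_poly_t, HPhi.
  - rewrite eval_poly_shift. f_equal. ring.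
  - rewrite eval_poly_shift. f_equal. ring.
  - rewrite eval_poly_mul_x. reflexivity.
  - rewrite eval_poly_mul_t. reflexivity.
  - reflexivity.
  - reflexivity.
  - rewrite IHe1, IHe2, eval_poly_app. reflexivity.
  - rewrite IHe1, IHe2, eval_poly_app, eval_poly_scale. ring.
  - rewrite IHe, eval_poly_scale. ring.
  - rewrite IHe, eval_poly_scale. reflexivity.
  - rewrite IHe2, IHe1. reflexivity.
Qed.

Definition poly_one : list monomial := [Monomial 1 0 0 0 0 0].

Lemma eval_poly_one (Phi : Fun2) (tau x t : R) : eval_poly Phi tau poly_one x t = Phi x t.
Proof.
  unfold poly_one; simpl. unfold eval_monomial, partial_deriv; simpl.
  replace (t + 0 * tau) with t by ring. ring.
Qed.

Lemma op_eq_of_normal_forms (tau : R) (a b : op_expr) :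
  (forall Phi x t, eval_poly Phi tau (nf_apply tau a poly_one) x t
                 = eval_poly Phi tau (nf_apply tau b poly_one) x t) ->
  op_eq (interp_op tau a) (interp_op tau b).
Proof.
  intros Hab Phi HPhi x t.
  assert (Hone : Phi = eval_poly Phi tau poly_one).
  { do 2 (apply functional_extensionality; intro). symmetry. apply eval_poly_one. }
  rewrite Hone, !interp_op_eval_poly by exact HPhi. apply Hab.
Qed.

Ltac reify_op tau e :=
  lazymatch e with
  | dx => constr:(oDx)
  | dt => constr:(oDt)
  | shift tau => constr:(oShiftFwd)
  | shift (- tau) => constr:(oShiftBwd)
  | mulf X => constr:(oMulX)
  | mulf T => constr:(oMulT)
  | op_id => constr:(oId)
  | op_zero => constr:(oZero)
  | fwd tau => constr:(oScal (/ tau) (oSub oShiftFwd oId))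
  | bwd tau => constr:(oScal (/ tau) (oSub oId oShiftBwd))
  | op_add ?a ?b => let ra := reify_op tau a in let rb := reify_op tau b in constr:(oAdd ra rb)
  | op_sub ?a ?b => let ra := reify_op tau a in let rb := reify_op tau b in constr:(oSub ra rb)
  | op_opp ?a => let ra := reify_op tau a in constr:(oOpp ra)
  | op_scal ?c ?a => let ra := reify_op tau a in constr:(oScal c ra)
  | op_comp ?a ?b => let ra := reify_op tau a in let rb := reify_op tau b in constr:(oComp ra rb)
  | comm ?a ?b =>
      let ra := reify_op tau a in let rb := reify_op tau b in
      constr:(oSub (oComp ra rb) (oComp rb ra))
  end.

Ltac op_eq_by_normal_forms tau :=
  lazymatch goal with
  | |- op_eq ?A ?B =>
      let a := reify_op tau A in let b := reify_op tau B in
      change (op_eq (interp_op tau a) (interp_op tau b));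
      apply op_eq_of_normal_forms; intros ? ? ?;
      (* [field] then treats each value of a partial derivative of Phi as an atom. *)
      cbv -[Rplus Rmult Ropp Rinv Rminus IZR pow partial_deriv]; field; assumption
  end.

Lemma op_ext (A B : Op) : (forall Phi x t, A Phi x t = B Phi x t) -> A = B.
Proof. intros HAB. do 3 (apply functional_extensionality; intro). apply HAB. Qed.

Lemma mulf_x2 : mulf (fun x _ => x ^ 2) = op_comp (mulf X) (mulf X).
Proof. apply op_ext. intros. unfold mulf, op_comp, X. ring. Qed.

Lemma mulf_t2 : mulf (fun _ t => t ^ 2) = op_comp (mulf T) (mulf T).
Proof. apply op_ext. intros. unfold mulf, op_comp, T. ring. Qed.

Lemma mulf_2xt : mulf (fun x t => 2 * x * t) = op_scal 2 (op_comp (mulf X) (mulf T)).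
Proof. apply op_ext. intros. unfold mulf, op_comp, op_scal, X, T. ring. Qed.

Lemma shift_double (tau : R) : shift (- 2 * tau) = op_comp (shift (- tau)) (shift (- tau)).
Proof. apply op_ext. intros. unfold shift, op_comp. f_equal. ring. Qed.

Lemma is_lim_ext_punctured (f g : R -> R) (l l' : R) :
  (forall h, h <> 0 -> f h = g h) -> l = l' -> is_lim f 0 l -> is_lim g 0 l'.
Proof.
  intros Hfg <- Hf. apply (is_lim_ext_loc f); [|exact Hf].
  exists (mkposreal 1 Rlt_0_1). intros h _ Hh. exact (Hfg h Hh).
Qed.

Lemma is_lim_forward_quotient (f : R -> R) (t : R) :
  ex_derive f t -> is_lim (fun h => / h * (f (t + h) - f t)) 0 (Derive f t).
Proof.
  intros Hd. apply is_lim_spec. intros eps.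
  destruct (proj1 (is_derive_Reals _ _ _) (Derive_correct f t Hd) eps (cond_pos eps))
    as [delta Hdelta].
  exists delta. intros h Hh Hh0.
  rewrite Rmult_comm. apply Hdelta; [exact Hh0|].
  change (Rabs (h - 0) < delta) in Hh. rewrite Rminus_0_r in Hh. exact Hh.
Qed.

Lemma is_lim_backward_quotient (f : R -> R) (t : R) :
  ex_derive f t -> is_lim (fun h => / h * (f t - f (t + - h))) 0 (Derive f t).
Proof.
  intros Hd.
  assert (Hneg : is_lim (fun h => (fun k => / k * (f (t + k) - f t)) (-1 * h + 0)) 0 (Derive f t)).
  { apply (is_lim_comp_lin (fun k => / k * (f (t + k) - f t))); [|lra].
    simpl. rewrite Rmult_0_r, Rplus_0_r. exact (is_lim_forward_quotient f t Hd). }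
  refine (is_lim_ext_punctured _ _ _ _ _ eq_refl Hneg).
  intros h Hh. cbv beta. replace (t + (-1 * h + 0)) with (t + - h) by ring. field. exact Hh.
Qed.

Lemma is_lim_continuous_affine (g : R -> R) (t c : R) :
  continuous g t -> is_lim (fun h => g (t + c * h)) 0 (g t).
Proof.
  intros Hg. apply (is_lim_comp_continuous (fun h => t + c * h)); [|exact Hg].
  apply (is_lim_ext_punctured (fun h => t + c * h) _ (t + c * 0)); [reflexivity|ring|].
  apply is_lim_plus'; [apply is_lim_const|].
  exact (is_lim_scal_l (fun h => h) c 0 0 (is_lim_id 0)).
Qed.

Lemma is_lim_mul_vanishing (f : R -> R) (a : R) :
  is_lim f 0 a -> is_lim (fun h => h * f h) 0 0.
Proof.
  intros Hf.
  apply (is_lim_ext_punctured (fun h => h * f h) _ (0 * a)); [reflexivity|ring|].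
  apply (is_lim_mult (fun h => h) f 0 0 a); [apply is_lim_id|exact Hf|exact I].
Qed.

Section Limits.

Variables (Phi : Fun2) (x t : R).
Hypothesis smooth_Phi : smooth Phi.

Let fwd_lim := is_lim_forward_quotient (fun s => Phi x s) t
  (smooth_ex_derive_t Phi x t smooth_Phi).
Let bwd_lim := is_lim_backward_quotient (fun s => Phi x s) t
  (smooth_ex_derive_t Phi x t smooth_Phi).
Let dx_shift_lim (c : R) := is_lim_continuous_affine (fun s => dx Phi x s) t c
  (ex_derive_continuous _ _ (smooth_ex_derive_t (dx Phi) x t (smooth_dx Phi smooth_Phi))).

Lemma is_lim_Kop :
  is_lim (fun tau => Kop tau Phi x t) 0 (- t * dx Phi x t - x * dt Phi x t).
Proof.
  refine (is_lim_ext_punctured _ _ _ _ _ _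
    (is_lim_plus' _ _ _ _ _ (is_lim_scal_l _ (- x) _ _ fwd_lim)
                            (is_lim_scal_l _ (- t) _ _ (dx_shift_lim (-1))))).
  - intros tau _. unfold Kop, fwd, op_sub, op_opp, op_comp, mulf, op_scal, shift, op_id, X, T.
    replace (t + -1 * tau) with (t + - tau) by ring. ring.
  - unfold dt. ring.
Qed.

Lemma is_lim_Dop :
  is_lim (fun tau => Dop tau Phi x t) 0 (- x * dx Phi x t - t * dt Phi x t).
Proof.
  refine (is_lim_ext_punctured _ _ _ _ _ _
    (is_lim_plus' _ _ _ _ _ (is_lim_scal_l _ (- x) _ _ (is_lim_const (dx Phi x t) 0))
                            (is_lim_scal_l _ (- t) _ _ bwd_lim))).
  - intros tau _. unfold Dop, bwd, op_sub, op_opp, op_comp, mulf, op_scal, shift, op_id, X, T.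
    ring.
  - unfold dt. ring.
Qed.

Lemma is_lim_C1op :
  is_lim (fun tau => C1op tau Phi x t) 0
    ((x ^ 2 + t ^ 2) * dt Phi x t + 2 * x * t * dx Phi x t).
Proof.
  refine (is_lim_ext_punctured _ _ _ _ _ _
    (is_lim_plus' _ _ _ _ _
      (is_lim_plus' _ _ _ _ _
        (is_lim_plus' _ _ _ _ _ (is_lim_scal_l _ (x ^ 2) _ _ fwd_lim)
                                (is_lim_scal_l _ (t ^ 2) _ _ bwd_lim))
        (is_lim_const (2 * x * t * dx Phi x t) 0))
      (is_lim_mul_vanishing _ _
        (is_lim_const (x * dx Phi x t + x ^ 2 * dx (dx Phi) x t) 0)))).
  - intros tau _.
    unfold C1op, fwd, op_add, op_sub, op_comp, mulf, op_scal, shift, op_id, X.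
    replace (t + - tau + tau) with t by ring. ring.
  - unfold dt. ring.
Qed.

Lemma is_lim_C2op :
  is_lim (fun tau => C2op tau Phi x t) 0
    (- (x ^ 2 + t ^ 2) * dx Phi x t - 2 * x * t * dt Phi x t).
Proof.
  refine (is_lim_ext_punctured _ _ _ _ _ _
    (is_lim_plus' _ _ _ _ _
      (is_lim_plus' _ _ _ _ _
        (is_lim_plus' _ _ _ _ _
          (is_lim_scal_l _ (- x ^ 2) _ _ (is_lim_const (dx Phi x t) 0))
          (is_lim_scal_l _ (- t ^ 2) _ _ (dx_shift_lim (-2))))
        (is_lim_scal_l _ (- (2 * x * t)) _ _ bwd_lim))
      (is_lim_mul_vanishing _ _ (is_lim_scal_l _ t _ _ (dx_shift_lim (-2)))))).
  - intros tau _.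
    unfold C2op, bwd, op_add, op_sub, op_opp, op_comp, mulf, op_scal, shift, op_id, T.
    ring.
  - unfold dt. ring.
Qed.

End Limits.

Theorem mainTheorem4 :
  (forall tau : R, tau <> 0 ->
    let H := Hop in let P := Pop in let K := Kop tau in let D := Dop tau in
    let C1 := C1op tau in let C2 := C2op tau in
    let Em := shift (- tau) in
    op_eq (comm K H) (op_comp Em P) /\
    op_eq (comm K P) (fwd tau) /\
    op_eq (comm H P) op_zero /\
    op_eq (comm D H) (bwd tau) /\
    op_eq (comm D C1) (op_add (op_opp C1) (op_scal tau (op_comp D D))) /\
    op_eq (comm H C1) (op_scal (-2) D) /\
    op_eq (comm D P) P /\
    op_eq (comm D C2) (op_opp C2) /\
    op_eq (comm P C2) (op_scal 2 D) /\
    op_eq (comm K C1) C2 /\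
    op_eq (comm K C2) (op_sub C1 (op_scal tau (op_comp D D))) /\
    op_eq (comm C1 C2) (op_scal (- tau) (op_add (op_comp D C2) (op_comp C2 D))) /\
    op_eq (comm H C2) (op_add (op_comp Em K) (op_comp K Em)) /\
    op_eq (comm P C1) (op_sub (op_scal (-2) K) (op_scal tau (op_add (op_comp D P) (op_comp P D)))) /\
    op_eq (comm K D) op_zero)
  /\
  (forall (Phi : Fun2), smooth Phi -> forall x t : R,
    is_lim (fun tau => Kop tau Phi x t) 0 (- t * dx Phi x t - x * dt Phi x t) /\
    is_lim (fun tau => Dop tau Phi x t) 0 (- x * dx Phi x t - t * dt Phi x t) /\
    is_lim (fun tau => C1op tau Phi x t) 0
      ((x ^ 2 + t ^ 2) * dt Phi x t + 2 * x * t * dx Phi x t) /\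
    is_lim (fun tau => C2op tau Phi x t) 0
      (- (x ^ 2 + t ^ 2) * dx Phi x t - 2 * x * t * dt Phi x t)).
Proof.
  split.
  - intros tau Htau. cbv zeta. unfold Hop, Pop, Kop, Dop, C1op, C2op.
    rewrite mulf_x2, mulf_t2, mulf_2xt, shift_double.
    repeat split; op_eq_by_normal_forms tau.
  - intros Phi HPhi x t.
    repeat split; auto using is_lim_Kop, is_lim_Dop, is_lim_C1op, is_lim_C2op.
Qed.
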